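(* Every hypergraph in $\mathcal L$ is an atomic Maker-Breaker critical hypergraph.
   Context: A hypergraph $\mathcal H=(V,E)$ has finite vertex set $V$ and $E\subseteq 2^V\setminus\{\emptyset\}$. In the Maker-Breaker game on $\mathcal H$, Maker and Breaker alternately claim unclaimed vertices, Maker first, until all are claimed; Maker wins if he claims all vertices of some edge, Breaker otherwise. $\mathcal H$ is Maker-Breaker critical if Maker wins on $\mathcal H$ but Breaker wins on $(V,E\setminus\{e\})$ for every $e\in E$; it is atomic Maker-Breaker critical if moreover it has no isolated vertices. $\mathcal H^1$ is the hypergraph with one vertex $v$ and the single edge $\{v\}$. For vertex-disjoint hypergraphs $\mathcal H_1,\mathcal H_2$ with edges $e_1\in E(\mathcal H_1)$, $e_2\in E(\mathcal H_2)$, the hypergraph $(\mathcal H_1,e_1)+(\mathcal H_2,e_2)$ has vertex set $V(\mathcal H_1)\cup V(\mathcal H_2)\cup\{z\}$ with $z$ a new vertex, and edge set $\big(E(\mathcal H_1)\cup E(\mathcal H_2)\cup\{e_1\cup\{z\},e_2\cup\{z\}\}\big)\setminus\{e_1,e_2\}$. $\mathcal L$ is the smallest family with $\mathcal H^1\in\mathcal L$ and closed under this operation: if $\mathcal H_1,\mathcal H_2\in\mathcal L$ (vertex-disjoint copies) and $e_i\in E(\mathcal H_i)$ are arbitrary, then $(\mathcal H_1,e_1)+(\mathcal H_2,e_2)\in\mathcal L$. *)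

From mathcomp Require Import all_boot.
From mathcomp Require Import finmap.
Set Implicit Arguments. Unset Strict Implicit. Unset Printing Implicit Defensive.
Local Open Scope fset_scope.

Definition hypergraph (V : {fset nat}) (E : {fset {fset nat}}) : Prop :=
  forall e, e \in E -> (e `<=` V) /\ e != fset0.

(* State: M = vertices claimed by Maker, U = unclaimed
   vertices ([n] is the fuel, equal to #|U| when started properly; Breaker's
   set plays no role in the outcome).  [turn = true] means Maker to move. *)
Fixpoint mwin (E : {fset {fset nat}}) (n : nat) (turn : bool)
    (M U : {fset nat}) : Prop :=
  match n with
  | 0 => exists2 e, e \in E & e `<=` M
  | n'.+1 =>
      if turn then exists2 v, v \in U & mwin E n' false (v |` M) (U `\ v)
      else forall v, v \in U -> mwin E n' true M (U `\ v)
  end.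

Definition maker_wins (V : {fset nat}) (E : {fset {fset nat}}) : Prop :=
  mwin E #|` V| true fset0 V.

Definition MB_critical (V : {fset nat}) (E : {fset {fset nat}}) : Prop :=
  maker_wins V E /\ (forall e, e \in E -> ~ maker_wins V (E `\ e)).

Definition no_isolated (V : {fset nat}) (E : {fset {fset nat}}) : Prop :=
  forall v, v \in V -> exists2 e, e \in E & v \in e.

Definition atomic_MB_critical (V : {fset nat}) (E : {fset {fset nat}}) : Prop :=
  MB_critical V E /\ no_isolated V E.

Definition hg_sum_V (V1 V2 : {fset nat}) (z : nat) : {fset nat} :=
  V1 `|` V2 `|` [fset z].

Definition hg_sum_E (E1 E2 : {fset {fset nat}}) (e1 e2 : {fset nat}) (z : nat)
  : {fset {fset nat}} :=
  (E1 `|` E2 `|` [fset (e1 `|` [fset z]); (e2 `|` [fset z])]) `\` [fset e1; e2].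

Inductive in_L : {fset nat} -> {fset {fset nat}} -> Prop :=
  | L_base (v : nat) : in_L [fset v] [fset [fset v]]
  | L_sum (V1 V2 : {fset nat}) (E1 E2 : {fset {fset nat}})
          (e1 e2 : {fset nat}) (z : nat) :
      in_L V1 E1 -> in_L V2 E2 ->
      V1 `&` V2 = fset0 -> z \notin V1 -> z \notin V2 ->
      e1 \in E1 -> e2 \in E2 ->
      in_L (hg_sum_V V1 V2 z) (hg_sum_E E1 E2 e1 e2 z).

From mathcomp Require Import all_boot.
From mathcomp Require Import finmap.
Set Implicit Arguments. Unset Strict Implicit. Unset Printing Implicit Defensive.
Local Open Scope fset_scope.

(* Maker wins on (H1,e1)+(H2,e2) by claiming z first: then e1 and e2 are as good as edges,
   so he faces two vertex-disjoint games from L; Breaker can answer in only one of them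
   and Maker continues in the other.  For criticality, every edge e of a member of L has
   a pairing: an involution of the vertices whose 2-cycles meet every edge other than e,
   with a fixed point in e.  Answering each Maker move by its partner, Breaker wins once e
   is removed.  Pairings glue along the operation: combine those of the two summands and
   pair z with the fixed point in the glued edge of the summand not containing e. *)

Lemma cardfsD1_succ (A : {fset nat}) a n : a \in A -> #|` A| = n.+1 -> #|` A `\ a| = n.
Proof. by move=> aA; rewrite (cardfsD1 a) aA => -[]. Qed.

Lemma in_hg_sum_V1 (V1 V2 : {fset nat}) z x : x \in V1 -> x \in hg_sum_V V1 V2 z.
Proof. by rewrite !inE => ->. Qed.

Lemma in_hg_sum_V2 (V1 V2 : {fset nat}) z x : x \in V2 -> x \in hg_sum_V V1 V2 z.
Proof. by rewrite !inE => ->; rewrite orbT. Qed.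

Lemma in_hg_sum_Vz (V1 V2 : {fset nat}) z : z \in hg_sum_V V1 V2 z.
Proof. by rewrite !inE eqxx orbT. Qed.

Lemma in_L_hypergraph V E : in_L V E -> hypergraph V E.
Proof.
elim=> [v | V1 V2 E1 E2 e1 e2 z _ hg1 _ hg2 _ _ _ e1E1 e2E2] e.
  rewrite inE => /eqP->; split; first exact: fsubset_refl.
  by apply/fset0Pn; exists v; rewrite inE.
have subV1 : V1 `<=` hg_sum_V V1 V2 z by apply/fsubsetP=> x /in_hg_sum_V1.
have subV2 : V2 `<=` hg_sum_V V1 V2 z by apply/fsubsetP=> x /in_hg_sum_V2.
have z_ne0 f : f `|` [fset z] != fset0.
  by apply/fset0Pn; exists z; rewrite !inE eqxx orbT.
rewrite /hg_sum_E !inE => /andP[_ /orP[/orP[eE|eE]|/orP[/eqP->|/eqP->]]].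
- by have [/fsubset_trans sub ne] := hg1 e eE; split; [exact: sub|].
- by have [/fsubset_trans sub ne] := hg2 e eE; split; [exact: sub|].
- have [sub _] := hg1 e1 e1E1; split=> //.
  by rewrite fsubUset (fsubset_trans sub) // fsub1set in_hg_sum_Vz.
- have [sub _] := hg2 e2 e2E2; split=> //.
  by rewrite fsubUset (fsubset_trans sub) // fsub1set in_hg_sum_Vz.
Qed.

Lemma in_L_notin_edge V E e z : in_L V E -> e \in E -> z \notin V -> z \notin e.
Proof. by move=> /in_L_hypergraph hg /hg[sub _]; apply: contra; apply: (fsubsetP sub). Qed.

Lemma in_L_neq0 V E : in_L V E -> V != fset0.
Proof.
case=> [v | V1 V2 E1 E2 e1 e2 z *]; apply/fset0Pn.
  by exists v; rewrite inE.
by exists z; apply: in_hg_sum_Vz.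
Qed.

Lemma hg_sum_E_glued (E1 E2 : {fset {fset nat}}) (e1 e2 : {fset nat}) z e :
  z \notin e1 -> z \notin e2 -> e \in [fset e1; e2] -> e `|` [fset z] \in hg_sum_E E1 E2 e1 e2 z.
Proof.
move=> ze1 ze2 e12; have ze : z \in e `|` [fset z] by rewrite !inE eqxx orbT.
rewrite /hg_sum_E in_fsetD in_fset2 in_fsetU in_fset2.
have -> : (e `|` [fset z] == e1) = false by apply: contraNF ze1 => /eqP <-.
have -> : (e `|` [fset z] == e2) = false by apply: contraNF ze2 => /eqP <-.
by move: e12; rewrite in_fset2 => /orP[]/eqP->; rewrite eqxx ?orbT.
Qed.

Lemma hg_sum_E_lift (E1 E2 : {fset {fset nat}}) (e1 e2 : {fset nat}) z f :
  z \notin e1 -> z \notin e2 -> f \in E1 `|` E2 ->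
  exists2 h, h \in hg_sum_E E1 E2 e1 e2 z & f `<=` h /\ h `<=` f `|` [fset z].
Proof.
move=> ze1 ze2 fE; have [f12 | f12] := boolP (f \in [fset e1; e2]).
  by exists (f `|` [fset z]); [exact: hg_sum_E_glued | split; [exact: fsubsetUl|]].
by exists f; [rewrite /hg_sum_E in_fsetD f12 in_fsetU fE | split; [|exact: fsubsetUl]].
Qed.

Lemma in_L_no_isolated V E : in_L V E -> no_isolated V E.
Proof.
elim=> [v | V1 V2 E1 E2 e1 e2 z L1 iso1 L2 iso2 _ zV1 zV2 e1E1 e2E2] x.
  by rewrite inE => /eqP->; exists [fset v]; rewrite inE.
have ze1 := in_L_notin_edge L1 e1E1 zV1; have ze2 := in_L_notin_edge L2 e2E2 zV2.
have lift f : f \in E1 `|` E2 -> x \in f ->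
    exists2 h, h \in hg_sum_E E1 E2 e1 e2 z & x \in h.
  by move=> /(hg_sum_E_lift ze1 ze2)[h hE [/fsubsetP fh _]] /fh; exists h.
rewrite !inE => /orP[/orP[xV|xV]|/eqP->].
- by have [f fE] := iso1 x xV; apply: lift; rewrite inE fE.
- by have [f fE] := iso2 x xV; apply: lift; rewrite inE fE orbT.
- by exists (e1 `|` [fset z]); rewrite ?hg_sum_E_glued ?inE ?eqxx ?orbT.
Qed.

Section MakerStrategy.

Variable E : {fset {fset nat}}.

(* Once Maker owns [M], each [f] in [F] is as good as an edge of [E]. *)
Definition covers (F : {fset {fset nat}}) (M : {fset nat}) :=
  forall f, f \in F -> exists2 g, g \in E & g `<=` f `|` M.

Lemma coversS F F' M : F' `<=` F -> covers F M -> covers F' M.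
Proof. by move=> /fsubsetP sub cov f /sub; apply: cov. Qed.

Lemma covers_hg_sum (E1 E2 : {fset {fset nat}}) (e1 e2 : {fset nat}) z M :
  z \notin e1 -> z \notin e2 ->
  covers (hg_sum_E E1 E2 e1 e2 z) M -> covers (E1 `|` E2) (z |` M).
Proof.
move=> ze1 ze2 cov f /(hg_sum_E_lift ze1 ze2)[h /cov[g gE gh] [_ hf]].
exists g => //; apply: fsubset_trans gh _; apply/fsubsetP=> x.
rewrite inE => /orP[/(fsubsetP hf) | xM]; rewrite !inE ?xM ?orbT //.
by case/orP=> ->; rewrite ?orbT.
Qed.

Lemma mwin_won n turn (M U : {fset nat}) :
  #|` U| = n -> (exists2 g, g \in E & g `<=` M) -> mwin E n turn M U.
Proof.
elim: n turn M U => [|n IH] turn M U Un [g gE gM] //=; first by exists g.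
have U_ne0 : U != fset0 by rewrite -cardfs_eq0 Un.
case: turn; last by move=> v vU; apply: IH; [exact: cardfsD1_succ | exists g].
have [v vU] := fset0Pn _ U_ne0; exists v => //.
by apply: IH; [exact: cardfsD1_succ | exists g; rewrite ?fsubsetU ?gM ?orbT].
Qed.

Lemma maker_strategy n :
  (forall M U W F, #|` U| = n -> in_L W F -> W `<=` U -> covers F M ->
     mwin E n true M U) /\
  (forall M U W1 F1 W2 F2, #|` U| = n -> in_L W1 F1 -> in_L W2 F2 ->
     W1 `<=` U -> W2 `<=` U -> W1 `&` W2 = fset0 -> covers F1 M -> covers F2 M ->
     mwin E n false M U).
Proof.
have U_ne0 W F U : in_L W F -> W `<=` U -> #|` U| != 0.
  move=> /in_L_neq0 W0 WU; rewrite cardfs_eq0.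
  by apply: contraNneq W0 => U0; rewrite -fsubset0 -U0.
elim: n => [|n [IHmaker IHbreaker]].
  split=> [M U W F U0 L WU | M U W1 F1 W2 F2 U0 L _ WU];
  by have := U_ne0 _ _ _ L WU; rewrite U0.
split=> [M U W F Un | M U W1 F1 W2 F2 Un L1 L2 W1U W2U W12 cov1 cov2 w wU].
  case=> [v | V1 V2 E1 E2 e1 e2 z L1 L2 V12 zV1 zV2 e1E1 e2E2] WU cov.
    have vU : v \in U by rewrite (fsubsetP WU) ?inE.
    exists v => //; apply: mwin_won; first exact: cardfsD1_succ.
    by have [g gE gv] := cov [fset v] (fset11 _); exists g; rewrite // fsetUC.
  have zU : z \in U by rewrite (fsubsetP WU) ?in_hg_sum_Vz.
  have ze1 := in_L_notin_edge L1 e1E1 zV1; have ze2 := in_L_notin_edge L2 e2E2 zV2.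
  have cov12 := covers_hg_sum ze1 ze2 cov.
  exists z => //; apply: (IHbreaker _ _ V1 E1 V2 E2) => //.
  - exact: cardfsD1_succ.
  - by rewrite fsubsetD1 zV1 andbT; apply/fsubsetP=> x /in_hg_sum_V1/(fsubsetP WU).
  - by rewrite fsubsetD1 zV2 andbT; apply/fsubsetP=> x /in_hg_sum_V2/(fsubsetP WU).
  - by apply: coversS cov12; exact: fsubsetUl.
  - by apply: coversS cov12; exact: fsubsetUr.
have Un' := cardfsD1_succ wU Un.
have : w \notin W1 `&` W2 by rewrite W12 inE.
rewrite inE negb_and => /orP[wW | wW].
  by apply: (IHmaker _ _ W1 F1); rewrite // fsubsetD1 W1U.
by apply: (IHmaker _ _ W2 F2); rewrite // fsubsetD1 W2U.
Qed.

End MakerStrategy.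

Lemma in_L_maker_wins V E : in_L V E -> maker_wins V E.
Proof.
move=> L; apply: ((maker_strategy E #|` V|).1 fset0 V V E) => //.
by move=> f fE; exists f; rewrite ?fsubsetUl.
Qed.

Section PairingStrategy.

Variables (E : {fset {fset nat}}) (p : nat -> nat).

Definition pair_in (U f : {fset nat}) :=
  exists a, [/\ a \in f `&` U, p a \in f `&` U, p (p a) = a & p a != a].

(* The game state does not record Breaker's vertices: they are those outside [M `|` U]. *)
Definition breaker_safe (M U : {fset nat}) :=
  forall f, f \in E -> (exists2 x, x \in f & x \notin M `|` U) \/ pair_in U f.

Lemma breaker_safe_no_edge M U g : breaker_safe M U -> #|` U| <= 1 -> g \in E ->
  ~~ (g `<=` M `|` U).
Proof.
move=> safe U1 /safe[[x xg xMU] | [a [/fsetIP[_ aU] /fsetIP[_ paU] _ pa_a]]].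
  by apply: contra xMU => /fsubsetP; apply.
suff : #|` [fset a; p a]| <= #|` U| by rewrite cardfs2 eq_sym pa_a ltnNge U1.
by apply: fsubset_leq_card; rewrite fsubUset !fsub1set aU paU.
Qed.

Lemma breaker_reply_safe M U v w : [disjoint M & U] -> breaker_safe M U ->
  v \in U -> w \in U `\ v -> (p v \in U `\ v -> w = p v) ->
  breaker_safe (v |` M) (U `\ v `\ w).
Proof.
move=> /fdisjointP MU safe vU wUv reply f /safe[[x xf xMU] | [a [af paf ppa pa_a]]].
  left; exists x => //; apply: contra xMU; rewrite !inE.
  by case/orP=> [/orP[/eqP-> | ->] | /and3P[_ _ ->]]; rewrite ?vU ?orbT.
move: af paf => /fsetIP[af aU] /fsetIP[paf paU].
have [w_pair | w_pair] := boolP (w \in [fset a; p a]).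
  left; exists w; first by move: w_pair; rewrite in_fset2 => /orP[]/eqP->.
  move: wUv; rewrite !inE eqxx /= orbF => /andP[wv wU].
  by rewrite negb_or wv /=; apply/negP => /MU; rewrite wU.
have [v_pair | v_pair] := boolP (v \in [fset a; p a]).
  have [/reply wE pv_pair] : p v \in U `\ v /\ p v \in [fset a; p a].
    move: v_pair; rewrite in_fset2 => /orP[]/eqP->;
    by rewrite ?ppa !inE ?eqxx ?orbT ?aU ?paU ?pa_a // eq_sym pa_a.
  by move: w_pair; rewrite wE pv_pair.
right; exists a; move: w_pair v_pair; rewrite !in_fset2 !negb_or.
move=> /andP[wa wpa] /andP[va vpa].
by rewrite !inE af paf aU paU ppa pa_a ![_ == w]eq_sym ![_ == v]eq_sym wa wpa va vpa.
Qed.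

Lemma pairing_strategy n M U : #|` U| = n -> [disjoint M & U] -> breaker_safe M U ->
  ~ mwin E n true M U.
Proof.
elim/ltn_ind: n M U => -[|[|n]] IH M U Un MU safe /=.
- have U1 : #|` U| <= 1 by rewrite Un.
  case=> g /(breaker_safe_no_edge safe U1)/negP gMU gM; apply: gMU.
  by rewrite (cardfs0_eq Un) fsetU0.
- have U1 : #|` U| <= 1 by rewrite Un.
  case=> v vU [g /(breaker_safe_no_edge safe U1)/negP gMU gvM]; apply: gMU.
  by apply: fsubset_trans gvM _; rewrite fsubUset fsub1set inE vU orbT fsubsetUl.
- case=> v vU; have Uv := cardfsD1_succ vU Un.
  have [w0 w0U] : exists w0, w0 \in U `\ v by apply/fset0Pn; rewrite -cardfs_eq0 Uv.
  pose w := if p v \in U `\ v then p v else w0.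
  have wU : w \in U `\ v by rewrite /w; case: ifP.
  move=> /(_ w wU); apply: (IH n (leqnSn _) _ _ (cardfsD1_succ wU Uv)).
    apply/fdisjointP=> x; rewrite !inE => /orP[/eqP-> | xM]; first by rewrite eqxx !andbF.
    by rewrite (negbTE (fdisjointP MU x xM)) !andbF.
  by apply: breaker_reply_safe => // pvU; rewrite /w pvU.
Qed.

End PairingStrategy.

Lemma pairing_breaker_wins V E p :
  (forall f, f \in E -> pair_in p V f) -> ~ maker_wins V E.
Proof.
move=> pairs; apply: (pairing_strategy (p := p)) => //; first exact: fdisjoint0X.
by move=> f /pairs; right.
Qed.

Lemma pair_inS p (U U' f f' : {fset nat}) : f `<=` f' -> U `<=` U' ->
  pair_in p U f -> pair_in p U' f'.
Proof.
move=> ff' UU' [a [aU paU ppa pa_a]].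
by exists a; split=> //; apply: (fsubsetP (fsetISS ff' UU')).
Qed.

Lemma eq_in_pair_in p q (U f : {fset nat}) :
  {in U, p =1 q} -> pair_in p U f -> pair_in q U f.
Proof.
move=> pq [a [aU paU ppa pa_a]]; have /fsetIP[_ /pq pqa] := aU.
have /fsetIP[_ /pq pqpa] := paU.
by exists a; rewrite -pqa -pqpa.
Qed.

Lemma pair_in_fixD1 p (U f : {fset nat}) u :
  p u = u -> pair_in p U f -> pair_in p (U `\ u) f.
Proof.
move=> pu [a [aU paU ppa pa_a]].
have ne_u b : p b != b -> b != u by move=> pb; apply: contraNneq pb => ->; rewrite pu.
move: aU paU; rewrite !inE => /andP[af aU] /andP[paf paU].
by exists a; split; rewrite // !inE ?af ?aU ?paf ?paU ?ne_u ?ppa // eq_sym.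
Qed.

(* The fixed point in [e] is what a later gluing pairs with the new vertex. *)
Definition pairing_for p (V : {fset nat}) (E : {fset {fset nat}}) (e : {fset nat}) :=
  (forall f, f \in E -> f != e -> pair_in p V f) /\ exists2 u, u \in e `&` V & p u = u.

Section Glue.

Variables (V1 V2 : {fset nat}) (z u2 : nat) (p1 p2 : nat -> nat).
Hypotheses (V12 : V1 `&` V2 = fset0) (zV1 : z \notin V1) (zV2 : z \notin V2).
Hypothesis u2V2 : u2 \in V2.

Definition glue x :=
  if x == z then u2 else if x == u2 then z else if x \in V1 then p1 x else p2 x.

Let notin_V1_V2 x : x \in V2 -> x \notin V1.
Proof. by apply/fdisjointP_sym; rewrite -fsetI_eq0 V12. Qed.

Lemma glue_l : {in V1, glue =1 p1}.
Proof.
move=> x xV1; rewrite /glue xV1.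
have -> : (x == z) = false by apply: contraNF zV1 => /eqP <-.
by have -> : (x == u2) = false by apply: contraTF xV1 => /eqP ->; apply: notin_V1_V2.
Qed.

Lemma glue_r : {in V2 `\ u2, glue =1 p2}.
Proof.
move=> x; rewrite in_fsetD1 => /andP[xu2 xV2].
rewrite /glue (negbTE xu2) (negbTE (notin_V1_V2 xV2)).
by have -> : (x == z) = false by apply: contraNF zV2 => /eqP <-.
Qed.

Lemma pair_in_glue_l (f f' : {fset nat}) :
  f `<=` f' -> pair_in p1 V1 f -> pair_in glue (hg_sum_V V1 V2 z) f'.
Proof.
move=> ff' /(eq_in_pair_in (fun x xV => esym (glue_l xV))).
by move/(pair_inS ff'); apply; apply/fsubsetP=> x /in_hg_sum_V1.
Qed.

Lemma pair_in_glue_r (f : {fset nat}) :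
  p2 u2 = u2 -> pair_in p2 V2 f -> pair_in glue (hg_sum_V V1 V2 z) f.
Proof.
move=> pu2 /(pair_in_fixD1 pu2)/(eq_in_pair_in (fun x xV => esym (glue_r xV))).
by move/(pair_inS (fsubset_refl _)); apply; apply/fsubsetP=> x /fsetD1P[_ /in_hg_sum_V2].
Qed.

Lemma pair_in_glue_z (f : {fset nat}) :
  u2 \in f -> pair_in glue (hg_sum_V V1 V2 z) (f `|` [fset z]).
Proof.
have zu2 : z != u2 by apply: contraNneq zV2 => ->.
move=> u2f; exists u2; rewrite /glue eq_sym (negbTE zu2) !eqxx.
by rewrite !inE u2f u2V2 eqxx !orbT zu2.
Qed.

End Glue.

Lemma pairing_for_hg_sum V1 V2 E1 E2 e1 e2 z e e' p1 p2 :
  V1 `&` V2 = fset0 -> z \notin V1 -> z \notin V2 -> e1 \in E1 ->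
  pairing_for p1 V1 E1 e' -> pairing_for p2 V2 E2 e2 ->
  e \in hg_sum_E E1 E2 e1 e2 z -> e' = e \/ e' = e1 /\ e = e1 `|` [fset z] ->
  exists p, pairing_for p (hg_sum_V V1 V2 z) (hg_sum_E E1 E2 e1 e2 z) e.
Proof.
move=> V12 zV1 zV2 e1E1 [pairs1 [u1 /fsetIP[u1e' u1V1] pu1]].
move=> [pairs2 [u2 /fsetIP[u2e2 u2V2] pu2]] eE e'E.
have e_e1 : e != e1.
  by move: eE; rewrite /hg_sum_E in_fsetD in_fset2 negb_or => /andP[/andP[]].
have e'e : e' `<=` e by case: e'E => [-> | [-> ->]]; rewrite ?fsubset_refl ?fsubsetUl.
exists (glue V1 z u2 p1 p2); split; last first.
  exists u1; first by rewrite in_fsetI (fsubsetP e'e) ?in_hg_sum_V1.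
  by rewrite (glue_l p1 p2 V12 zV1 u2V2).
move=> f; rewrite /hg_sum_E in_fsetD in_fset2 negb_or => /andP[/andP[f_e1 f_e2]].
rewrite !inE => /orP[/orP[fE1 | fE2] | /orP[/eqP-> | /eqP->]] f_e.
- apply: (pair_in_glue_l p2 V12 zV1 u2V2 (fsubset_refl f)); apply: pairs1 => //.
  by case: e'E => [-> | [-> _]].
- by apply: (pair_in_glue_r p1 V12 zV2 pu2); apply: pairs2.
- apply: (pair_in_glue_l p2 V12 zV1 u2V2 (fsubsetUl _ _)); apply: pairs1 => //.
  by case: e'E => [-> | [_ eE1]]; [rewrite eq_sym | rewrite eE1 eqxx in f_e].
- exact: (pair_in_glue_z V1 p1 p2 zV2 u2V2 u2e2).
Qed.

Lemma hg_sum_EC (E1 E2 : {fset {fset nat}}) (e1 e2 : {fset nat}) z :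
  hg_sum_E E1 E2 e1 e2 z = hg_sum_E E2 E1 e2 e1 z.
Proof.
by rewrite /hg_sum_E (fsetUC E1) (fsetUC [fset e1 `|` [fset z]]) (fsetUC [fset e1]).
Qed.

Lemma hg_sum_VC (V1 V2 : {fset nat}) z : hg_sum_V V1 V2 z = hg_sum_V V2 V1 z.
Proof. by rewrite /hg_sum_V (fsetUC V1). Qed.

Lemma in_L_pairing V E e : in_L V E -> e \in E -> exists p, pairing_for p V E e.
Proof.
move=> L; elim: L e => [v | V1 V2 E1 E2 e1 e2 z L1 IH1 L2 IH2 V12 zV1 zV2 e1E1 e2E2] e.
  rewrite inE => /eqP->; exists id; split=> [f | ].
    by rewrite inE => /eqP->; rewrite eqxx.
  by exists v; rewrite ?inE ?eqxx.
have V21 : V2 `&` V1 = fset0 by rewrite fsetIC.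
move=> eE; have := eE; rewrite {1}/hg_sum_E !inE => /andP[_].
case/orP=> [/orP[eEi | eEi] | /orP[/eqP eEi | /eqP eEi]].
- have [p1 P1] := IH1 e eEi; have [p2 P2] := IH2 e2 e2E2.
  exact: (pairing_for_hg_sum V12 zV1 zV2 e1E1 P1 P2 eE (or_introl erefl)).
- have [p2 P2] := IH2 e eEi; have [p1 P1] := IH1 e1 e1E1.
  rewrite hg_sum_EC hg_sum_VC in eE *.
  exact: (pairing_for_hg_sum V21 zV2 zV1 e2E2 P2 P1 eE (or_introl erefl)).
- have [p1 P1] := IH1 e1 e1E1; have [p2 P2] := IH2 e2 e2E2.
  exact: (pairing_for_hg_sum V12 zV1 zV2 e1E1 P1 P2 eE (or_intror (conj erefl eEi))).
- have [p2 P2] := IH2 e2 e2E2; have [p1 P1] := IH1 e1 e1E1.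
  rewrite hg_sum_EC hg_sum_VC in eE *.
  exact: (pairing_for_hg_sum V21 zV2 zV1 e2E2 P2 P1 eE (or_intror (conj erefl eEi))).
Qed.

Theorem proposition6p8 (V : {fset nat}) (E : {fset {fset nat}}) :
  in_L V E -> atomic_MB_critical V E.
Proof.
move=> L; split; last exact: in_L_no_isolated.
split=> [|e eE]; first exact: in_L_maker_wins.
have [p [pairs _]] := in_L_pairing L eE.
by apply: (pairing_breaker_wins (p := p)) => f /fsetD1P[f_e fE]; apply: pairs.
Qed.
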